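(* Let $p\in(1,\infty)$ and let $Y$ be a Banach space admitting an equivalent norm with $(\beta)$-modulus of power type $p$. Then there is a constant $C=C(Y)>0$ such that for every integer $l\ge1$, $$c_Y(P^\omega_l)\ge C\,l^{1/p}.$$
   Context: For a Banach space $X$ with closed unit ball $B_X$ and a sequence $(y_n)_{n\ge1}$ in $X$, let $\mathrm{sep}[(y_n)]:=\inf\{\|y_m-y_n\|: m\neq n\}$. The $(\beta)$-modulus of a norm is $$\overline{\beta}_X(t):=1-\sup\Big\{\inf_{n\ge1}\tfrac{\|x+y_n\|}{2}\ :\ x\in B_X,\ (y_n)_{n\ge1}\subset B_X,\ \mathrm{sep}[(y_n)]\ge t\Big\},$$ and the norm has $(\beta)$-modulus of power type $p$ if there is $c>0$ with $\overline{\beta}_X(t)\ge ct^p$ for all $t\in(0,2]$. The parasol graph $P^\omega_1$ has vertex set $\{r,b,s\}\cup\{t_i:i\ge1\}$ and edges $\{r,b\}$, $\{b,t_i\}$, $\{t_i,s\}$ ($i\ge1$). For $l\ge2$, $P^\omega_l$ is obtained from $P^\omega_{l-1}$ by replacing every edge $\{u,v\}$ of $P^\omega_{l-1}$ by a copy of $P^\omega_1$, identifying the vertex $r$ of the copy with one endpoint of the edge and the vertex $s$ of the copy with the other endpoint (the claim holds for any such choice of identifications). Each $P^\omega_l$ carries the unweighted shortest-path metric. The distortion of an injective map is $\mathrm{dist}(f)=\mathrm{Lip}(f)\mathrm{Lip}(f^{-1})$ and $c_Y(M):=\inf\{\mathrm{dist}(f): f\colon M\to Y\text{ injective}\}$ ($+\infty$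 if no bi-Lipschitz embedding exists). *)

From Stdlib Require Import Reals Lra Classical ClassicalEpsilon.
Open Scope R_scope.

Lemma Rsup_spec_ex (E : R -> Prop) :
  exists l, is_lub E l \/ ((~ exists l', is_lub E l') /\ l = 0).
Proof.
  destruct (classic (exists l', is_lub E l')) as [[l H]|H].
  - exists l; now left.
  - exists 0; now right.
Qed.

(* sup E when it exists in R (E nonempty, bounded above); 0 otherwise *)
Definition Rsup (E : R -> Prop) : R :=
  proj1_sig (constructive_indefinite_description _ (Rsup_spec_ex E)).

Definition Rinf (E : R -> Prop) : R := - Rsup (fun v => E (- v)).

Record Banach := {
  carrier :> Type;
  vzero : carrier;
  vadd : carrier -> carrier -> carrier;
  vopp : carrier -> carrier;
  vscal : R -> carrier -> carrier;
  vnorm : carrier -> R;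
  vadd_assoc : forall x y z, vadd x (vadd y z) = vadd (vadd x y) z;
  vadd_comm : forall x y, vadd x y = vadd y x;
  vadd_0 : forall x, vadd x vzero = x;
  vadd_opp : forall x, vadd x (vopp x) = vzero;
  vscal_1 : forall x, vscal 1 x = x;
  vscal_assoc : forall a b x, vscal a (vscal b x) = vscal (a * b) x;
  vscal_distr_v : forall a x y, vscal a (vadd x y) = vadd (vscal a x) (vscal a y);
  vscal_distr_s : forall a b x, vscal (a + b) x = vadd (vscal a x) (vscal b x);
  vnorm_nonneg : forall x, 0 <= vnorm x;
  vnorm_eq0 : forall x, vnorm x = 0 -> x = vzero;
  vnorm_scal : forall a x, vnorm (vscal a x) = Rabs a * vnorm x;
  vnorm_triangle : forall x y, vnorm (vadd x y) <= vnorm x + vnorm y;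
  vcomplete : forall u : nat -> carrier,
    (forall eps, 0 < eps -> exists N, forall m n, (N <= m)%nat -> (N <= n)%nat ->
        vnorm (vadd (u m) (vopp (u n))) < eps) ->
    exists l, forall eps, 0 < eps -> exists N, forall n, (N <= n)%nat ->
        vnorm (vadd (u n) (vopp l)) < eps
}.

Definition vsub (Y : Banach) (x y : Y) : Y := vadd Y x (vopp Y y).

Definition equiv_norm (Y : Banach) (N : Y -> R) : Prop :=
  (forall x, 0 <= N x) /\
  (forall x, N x = 0 -> x = vzero Y) /\
  (forall a x, N (vscal Y a x) = Rabs a * N x) /\
  (forall x y, N (vadd Y x y) <= N x + N y) /\
  exists a b, 0 < a /\ 0 < b /\ forall x, a * vnorm Y x <= N x /\ N x <= b * vnorm Y x.

Definition sep (Y : Banach) (N : Y -> R) (y : nat -> Y) : R :=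
  Rinf (fun v => exists m n, m <> n /\ v = N (vsub Y (y m) (y n))).

Definition beta_modulus (Y : Banach) (N : Y -> R) (t : R) : R :=
  1 - Rsup (fun v => exists (x : Y) (y : nat -> Y),
            N x <= 1 /\ (forall n, N (y n) <= 1) /\ t <= sep Y N y /\
            v = Rinf (fun w => exists n, w = N (vadd Y x (y n)) / 2)).

Definition beta_power_type (Y : Banach) (N : Y -> R) (p : R) : Prop :=
  exists c, 0 < c /\ forall t, 0 < t -> t <= 2 -> beta_modulus Y N t >= c * Rpower t p.

Inductive EP1 : Type := ERB | EBT (i : nat) | ETS (i : nat).

Fixpoint PEdge (l : nat) : Type :=
  match l with O => unit | S k => (PEdge k * EP1)%type end.

(* vertices of P_l: the vertices of P_(l-1), plus for each edge e of P_(l-1)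
   the new vertices b_e (None) and t_(e,i) (Some i) *)
Fixpoint PVert (l : nat) : Type :=
  match l with O => bool | S k => (PVert k + PEdge k * option nat)%type end.

(* an orientation: for each level k and edge e of P_k, whether the first
   endpoint of e is identified with r of the copy of P_1 (true) or with s *)
Definition orientation := forall k, PEdge k -> bool.

Fixpoint pends (o : orientation) (l : nat) : PEdge l -> PVert l * PVert l :=
  match l return PEdge l -> PVert l * PVert l with
  | O => fun _ => (false, true)
  | S k => fun ex =>
      let e := fst ex in
      let uv := pends o k e in
      let rs := if o k e then uv else (snd uv, fst uv) in
      match snd ex with
      | ERB => (inl (fst rs), inr (e, None))
      | EBT i => (inr (e, None), inr (e, Some i))
      | ETS i => (inr (e, Some i), inl (snd rs))
      end
  end.

Definition padj (o : orientation) (l : nat) (u v : PVert l) : Prop :=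
  exists e, pends o l e = (u, v) \/ pends o l e = (v, u).

Inductive pwalk (o : orientation) (l : nat) : PVert l -> PVert l -> nat -> Prop :=
  | pwalk0 : forall u, pwalk o l u u 0
  | pwalkS : forall u w v n, padj o l u w -> pwalk o l w v n -> pwalk o l u v (S n).

(* shortest-path metric of P_l (P_l is connected, so the set is nonempty) *)
Definition pdist (o : orientation) (l : nat) (u v : PVert l) : R :=
  Rinf (fun r => exists n, pwalk o l u v n /\ r = INR n).

(* Lip(f), Lip(f^{-1}) as infima of Lipschitz constants (= sup of ratios);
   only evaluated for bi-Lipschitz maps, see cY_ge *)
Definition is_Lip_const (Y : Banach) (o : orientation) (l : nat)
  (f : PVert l -> Y) (L : R) : Prop :=
  forall u v, vnorm Y (vsub Y (f u) (f v)) <= L * pdist o l u v.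

Definition is_invLip_const (Y : Banach) (o : orientation) (l : nat)
  (f : PVert l -> Y) (L : R) : Prop :=
  forall u v, pdist o l u v <= L * vnorm Y (vsub Y (f u) (f v)).

Definition Lip (Y : Banach) (o : orientation) (l : nat) (f : PVert l -> Y) : R :=
  Rinf (fun L => 0 <= L /\ is_Lip_const Y o l f L).

Definition invLip (Y : Banach) (o : orientation) (l : nat) (f : PVert l -> Y) : R :=
  Rinf (fun L => 0 <= L /\ is_invLip_const Y o l f L).

Definition bi_Lipschitz (Y : Banach) (o : orientation) (l : nat) (f : PVert l -> Y) : Prop :=
  (exists L, is_Lip_const Y o l f L) /\ (exists L, is_invLip_const Y o l f L).

(* c_Y(P_l) >= K : every injective f has dist(f) = Lip(f)Lip(f^-1) >= K,
   where dist(f) = +oo (so the bound holds) when f is not bi-Lipschitz *)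
Definition cY_ge (Y : Banach) (o : orientation) (l : nat) (K : R) : Prop :=
  forall f : PVert l -> Y, (forall u v, f u = f v -> u = v) ->
    bi_Lipschitz Y o l f -> K <= Lip Y o l f * invLip Y o l f.

From Stdlib Require Import Reals Lra Lia Classical ClassicalEpsilon.
Open Scope R_scope.

(* Measure a bi-Lipschitz f : P_l -> Y in an equivalent norm N whose
   (beta)-modulus is at least c t^p, so that f expands distances by at least G
   and maps edges to segments of length at most H.  Subdividing an edge turns it
   into a parasol r -> b -> t_i -> s whose rescaled image steps have length at
   most A and whose tips are pairwise at least 2 G apart.  Then b - r and t_i - b
   are admissible for the modulus, so some r -> t_i is clearly shorter than two
   steps, and the edge r -> s is shorter than three steps by [level_loss G H].
   Going down the l levels of P_l, the edge of P_0 has image length at most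
   3^l (H - l level_loss) but at least 3^l G; this unwinds to
   l <~ (H / G)^p <~ dist(f)^p. *)

Lemma Rsup_cases E :
  is_lub E (Rsup E) \/ ((~ exists l, is_lub E l) /\ Rsup E = 0).
Proof.
  unfold Rsup; destruct (constructive_indefinite_description _ _) as [l H]; exact H.
Qed.

Lemma Rsup_is_lub E x M :
  E x -> (forall y, E y -> y <= M) -> is_lub E (Rsup E).
Proof.
  intros Ex HM; destruct (Rsup_cases E) as [H | [H _]]; [exact H |].
  exfalso; apply H; destruct (completeness E) as [l Hl];
    [exists M; exact HM | exists x; exact Ex | exists l; exact Hl].
Qed.

Lemma Rsup_ge E x M : E x -> (forall y, E y -> y <= M) -> x <= Rsup E.
Proof. intros Ex HM; exact (proj1 (Rsup_is_lub E x M Ex HM) x Ex). Qed.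

Lemma Rsup_le E x M : E x -> (forall y, E y -> y <= M) -> Rsup E <= M.
Proof. intros Ex HM; exact (proj2 (Rsup_is_lub E x M Ex HM) M HM). Qed.

Lemma Rinf_le E x m : E x -> (forall y, E y -> m <= y) -> Rinf E <= x.
Proof.
  intros Ex Hm; unfold Rinf.
  enough (- x <= Rsup (fun v => E (- v))) by lra.
  apply (Rsup_ge _ _ (- m)); [rewrite Ropp_involutive; exact Ex |].
  intros y Hy; specialize (Hm _ Hy); lra.
Qed.

Lemma Rinf_ge E x m : E x -> (forall y, E y -> m <= y) -> m <= Rinf E.
Proof.
  intros Ex Hm; unfold Rinf.
  enough (Rsup (fun v => E (- v)) <= - m) by lra.
  apply (Rsup_le _ (- x)); [rewrite Ropp_involutive; exact Ex |].
  intros y Hy; specialize (Hm _ Hy); lra.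
Qed.

(* The empty case matters: there [Rinf] falls back to [0]. *)
Lemma Rinf_nonneg E : (forall y, E y -> 0 <= y) -> 0 <= Rinf E.
Proof.
  intros H; destruct (classic (exists x, E x)) as [[x Ex] | Hempty].
  - exact (Rinf_ge _ x 0 Ex H).
  - unfold Rinf; destruct (Rsup_cases (fun v => E (- v))) as [[_ Hleast] | [_ ->]]; [| lra].
    enough (Rsup (fun v => E (- v)) <= Rsup (fun v => E (- v)) - 1) by lra.
    apply Hleast; intros y Hy; exfalso; apply Hempty; eauto.
Qed.

Section VectorAlgebra.
Variable Y : Banach.

Lemma vadd_0_l x : vadd Y (vzero Y) x = x.
Proof. rewrite vadd_comm; apply vadd_0. Qed.

Lemma vadd_reg_l x y z : vadd Y x y = vadd Y x z -> y = z.
Proof.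
  intros H.
  rewrite <- (vadd_0_l y), <- (vadd_0_l z), <- (vadd_opp Y x), (vadd_comm _ x),
    <- !vadd_assoc, H; reflexivity.
Qed.

Lemma vscal_0 x : vscal Y 0 x = vzero Y.
Proof.
  apply (vadd_reg_l (vscal Y 0 x)).
  rewrite vadd_0, <- vscal_distr_s, Rplus_0_l; reflexivity.
Qed.

Lemma vopp_vscal x : vopp Y x = vscal Y (-1) x.
Proof.
  apply (vadd_reg_l x); rewrite vadd_opp.
  rewrite <- (vscal_1 Y x) at 1; rewrite <- vscal_distr_s.
  replace (1 + -1) with 0 by ring; symmetry; apply vscal_0.
Qed.

Lemma vsub_chain a b c : vadd Y (vsub Y a b) (vsub Y b c) = vsub Y a c.
Proof.
  unfold vsub; rewrite <- vadd_assoc, (vadd_assoc _ (vopp Y b)),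
    (vadd_comm _ (vopp Y b)), vadd_opp, vadd_0_l; reflexivity.
Qed.

Lemma vsub_swap a b : vsub Y b a = vopp Y (vsub Y a b).
Proof.
  apply (vadd_reg_l (vsub Y a b)); rewrite vsub_chain, vadd_opp; apply vadd_opp.
Qed.

Lemma vsub_common_r a b c : vsub Y (vsub Y a c) (vsub Y b c) = vsub Y a b.
Proof. unfold vsub at 1; rewrite <- (vsub_swap b c); apply vsub_chain. Qed.

Lemma vsub_vscal k a b : vsub Y (vscal Y k a) (vscal Y k b) = vscal Y k (vsub Y a b).
Proof.
  unfold vsub; rewrite vscal_distr_v, !vopp_vscal, !vscal_assoc, Rmult_comm; reflexivity.
Qed.

End VectorAlgebra.

Section Beta.
Variables (Y : Banach) (N : Y -> R).
Hypothesis HN : equiv_norm Y N.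

Lemma N_nonneg x : 0 <= N x.
Proof. destruct HN as (H & _); apply H. Qed.

Lemma N_vscal k x : N (vscal Y k x) = Rabs k * N x.
Proof. destruct HN as (_ & _ & H & _); apply H. Qed.

Lemma N_vadd x y : N (vadd Y x y) <= N x + N y.
Proof. destruct HN as (_ & _ & _ & H & _); apply H. Qed.

Lemma N_vsub_sym a b : N (vsub Y a b) = N (vsub Y b a).
Proof.
  rewrite (vsub_swap Y b a), vopp_vscal, N_vscal, Rabs_left; lra.
Qed.

Lemma N_vsub_triangle a b c : N (vsub Y a c) <= N (vsub Y a b) + N (vsub Y b c).
Proof. rewrite <- (vsub_chain Y a b c); apply N_vadd. Qed.

Lemma sep_ge (y : nat -> Y) t :
  (forall m n, m <> n -> t <= N (vsub Y (y m) (y n))) -> t <= sep Y N y.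
Proof.
  intros Hy; apply (Rinf_ge _ (N (vsub Y (y 0%nat) (y 1%nat)))).
  - exists 0%nat, 1%nat; split; [discriminate | reflexivity].
  - intros w (m & n & Hmn & ->); exact (Hy m n Hmn).
Qed.

Lemma le_one_sub_beta_modulus x (y : nat -> Y) t m :
  N x <= 1 -> (forall n, N (y n) <= 1) -> t <= sep Y N y ->
  (forall n, m <= N (vadd Y x (y n)) / 2) -> m <= 1 - beta_modulus Y N t.
Proof.
  intros Hx Hy Ht Hm; unfold beta_modulus.
  match goal with |- _ <= 1 - (1 - ?S) => enough (m <= S) by lra end.
  apply Rle_trans with (Rinf (fun w => exists n, w = N (vadd Y x (y n)) / 2)).
  - apply (Rinf_ge _ (N (vadd Y x (y 0%nat)) / 2)); [exists 0%nat; reflexivity |].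
    intros w [n ->]; apply Hm.
  - apply (Rsup_ge _ _ 1); [exists x, y; repeat split; assumption |].
    intros v (x' & y' & Hx' & Hy' & _ & ->).
    apply Rle_trans with (N (vadd Y x' (y' 0%nat)) / 2).
    + apply (Rinf_le _ _ 0); [exists 0%nat; reflexivity |].
      intros w [n ->]; pose proof (N_nonneg (vadd Y x' (y' n))); lra.
    + pose proof (N_vadd x' (y' 0%nat)); specialize (Hy' 0%nat); lra.
Qed.

(* Rescaled by [D], the steps [b - r] and [t_n - b] are admissible [x], [y_n]
   for the modulus, and [x + y_n] is [t_n - r], which is long when [s - r] is. *)
Lemma beta_three_step D t (r b s : Y) (tn : nat -> Y) :
  0 < D -> N (vsub Y b r) <= D ->
  (forall n, N (vsub Y (tn n) b) <= D) -> (forall n, N (vsub Y s (tn n)) <= D) ->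
  (forall i j, i <> j -> t * D <= N (vsub Y (tn i) (tn j))) ->
  N (vsub Y s r) <= D * (3 - 2 * beta_modulus Y N t).
Proof.
  intros HD Hbr Htb Hst Hsep.
  set (k := / D); assert (Hk : 0 < k) by (apply Rinv_0_lt_compat; exact HD).
  assert (HNk : forall v, N (vscal Y k v) = k * N v)
    by (intros v; rewrite N_vscal, Rabs_pos_eq; lra).
  assert (HkD : forall v, N v <= D -> k * N v <= 1).
  { intros v Hv; apply (Rmult_le_reg_l D); [exact HD |].
    unfold k; rewrite <- Rmult_assoc, Rinv_r, Rmult_1_l, Rmult_1_r; lra. }
  set (x := vscal Y k (vsub Y b r)); set (y := fun n => vscal Y k (vsub Y (tn n) b)).
  assert (Hxy : forall n, N (vadd Y x (y n)) = k * N (vsub Y (tn n) r)).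
  { intros n; unfold x, y; rewrite <- vscal_distr_v, vadd_comm, vsub_chain; apply HNk. }
  assert (Hbeta : k * (N (vsub Y s r) - D) / 2 <= 1 - beta_modulus Y N t).
  { apply (le_one_sub_beta_modulus x y).
    - unfold x; rewrite HNk; apply HkD, Hbr.
    - intros n; unfold y; rewrite HNk; apply HkD, Htb.
    - apply sep_ge; intros i j Hij; unfold y.
      rewrite vsub_vscal, vsub_common_r, HNk.
      specialize (Hsep i j Hij); unfold k.
      apply (Rmult_le_reg_l D); [exact HD |].
      rewrite <- Rmult_assoc, Rinv_r, Rmult_1_l; lra.
    - intros n; rewrite Hxy.
      pose proof (N_vsub_triangle s (tn n) r); specialize (Hst n).
      apply Rmult_le_compat_r; [lra |]; apply Rmult_le_compat_l; lra. }
  apply (Rmult_le_compat_l (2 * D)) in Hbeta; [| lra].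
  replace (2 * D * (k * (N (vsub Y s r) - D) / 2)) with (N (vsub Y s r) - D)
    in Hbeta by (unfold k; field; lra).
  lra.
Qed.

End Beta.

Lemma Rpower_pos x y : 0 < Rpower x y.
Proof. apply exp_pos. Qed.

Section PowerType.
Variables (Y : Banach) (N : Y -> R) (p c : R).
Hypothesis HN : equiv_norm Y N.
Hypothesis hp : 1 < p.
Hypothesis hc : 0 < c.
Hypothesis hbeta : forall t, 0 < t -> t <= 2 -> beta_modulus Y N t >= c * Rpower t p.

Definition level_loss G H := 2 / 3 * c * Rpower (2 * G) p / Rpower H (p - 1).

Lemma level_loss_pos G H : 0 < level_loss G H.
Proof.
  unfold level_loss; pose proof (Rpower_pos (2 * G) p); pose proof (Rpower_pos H (p - 1)).
  apply Rdiv_lt_0_compat; [apply Rmult_lt_0_compat |]; lra.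
Qed.

Lemma Rpower_peel x : 0 < x -> Rpower x p = x * Rpower x (p - 1).
Proof.
  intros Hx; replace p with (1 + (p - 1)) at 1 by ring.
  rewrite Rpower_plus, Rpower_1 by exact Hx; reflexivity.
Qed.

Lemma Rpower_ratio_ge G A H :
  0 < G -> G <= A -> A <= H ->
  Rpower (2 * G) p / Rpower H (p - 1) <= A * Rpower (2 * G / A) p.
Proof.
  intros HG HGA HAH.
  assert (HA : 0 < A) by lra.
  assert (Ht : 0 < 2 * G / A) by (apply Rdiv_lt_0_compat; lra).
  replace (2 * G) with (2 * G / A * A) at 1 by (field; lra).
  rewrite <- Rpower_mult_distr, (Rpower_peel A) by assumption.
  pose proof (Rpower_pos A (p - 1)); pose proof (Rpower_pos H (p - 1)).
  assert (Rpower A (p - 1) <= Rpower H (p - 1)) by (apply Rle_Rpower_l; lra).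
  pose proof (Rpower_pos (2 * G / A) p).
  replace (Rpower (2 * G / A) p * (A * Rpower A (p - 1)) / Rpower H (p - 1))
    with (A * Rpower (2 * G / A) p * (Rpower A (p - 1) / Rpower H (p - 1))) by (field; lra).
  rewrite <- (Rmult_1_r (A * Rpower (2 * G / A) p)) at 2.
  apply Rmult_le_compat_l; [apply Rmult_le_pos; lra |].
  unfold Rdiv; apply (Rmult_le_reg_r (Rpower H (p - 1))); [lra |].
  rewrite Rmult_assoc, Rinv_l; lra.
Qed.

Lemma three_step_contraction G A H sg (r b s : Y) (tn : nat -> Y) :
  0 < G -> G <= A -> A <= H -> 0 < sg ->
  N (vsub Y b r) <= sg * A -> (forall n, N (vsub Y (tn n) b) <= sg * A) ->
  (forall n, N (vsub Y s (tn n)) <= sg * A) ->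
  (forall i j, i <> j -> 2 * sg * G <= N (vsub Y (tn i) (tn j))) ->
  N (vsub Y s r) <= 3 * sg * (A - level_loss G H).
Proof.
  intros HG HGA HAH Hsg Hbr Htb Hst Hsep.
  set (t := 2 * G / A).
  assert (Ht0 : 0 < t) by (apply Rdiv_lt_0_compat; lra).
  assert (Ht2 : t <= 2) by (apply (Rmult_le_reg_r A); unfold t; [lra | field_simplify; lra]).
  assert (HD : 0 < sg * A) by (apply Rmult_lt_0_compat; lra).
  pose proof (beta_three_step Y N HN (sg * A) t r b s tn HD Hbr Htb Hst) as Hstep.
  eapply Rle_trans.
  { apply Hstep; intros i j Hij; unfold t.
    replace (2 * G / A * (sg * A)) with (2 * sg * G) by (field; lra); auto. }
  pose proof (hbeta t Ht0 Ht2) as Hbt.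
  pose proof (Rpower_ratio_ge G A H HG HGA HAH) as Hratio; fold t in Hratio.
  assert (Hgain : c * (Rpower (2 * G) p / Rpower H (p - 1)) <= A * beta_modulus Y N t)
    by nra.
  replace (3 * sg * (A - level_loss G H))
    with (3 * (sg * A) - 2 * sg * (c * (Rpower (2 * G) p / Rpower H (p - 1))))
    by (unfold level_loss; field; pose proof (Rpower_pos H (p - 1)); lra).
  nra.
Qed.

Lemma level_loss_root x G H :
  0 < x -> 0 < G -> x * level_loss G H <= H - G ->
  Rpower (x * (2 / 3 * c * Rpower 2 p)) (1 / p) <= H / G.
Proof.
  intros Hx HG Hlev.
  pose proof (level_loss_pos G H).
  assert (HH : 0 < H) by nra.
  assert (HHG : 0 < H / G) by (apply Rdiv_lt_0_compat; lra).
  pose proof (Rpower_pos G p); pose proof (Rpower_pos H (p - 1)); pose proof (Rpower_pos 2 p).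
  assert (Hpow : x * (2 / 3 * c * Rpower 2 p) <= Rpower (H / G) p).
  { apply (Rmult_le_reg_r (Rpower G p)); [lra |].
    rewrite Rpower_mult_distr by lra.
    replace (H / G * G) with H by (field; lra).
    rewrite (Rpower_peel H) by lra.
    unfold level_loss in Hlev; rewrite <- Rpower_mult_distr in Hlev by lra.
    apply (Rmult_le_compat_r (Rpower H (p - 1))) in Hlev; [| lra].
    replace (x * (2 / 3 * c * (Rpower 2 p * Rpower G p) / Rpower H (p - 1)) * Rpower H (p - 1))
      with (x * (2 / 3 * c * Rpower 2 p) * Rpower G p) in Hlev by (field; lra).
    pose proof (Rmult_le_pos G (Rpower H (p - 1)) ltac:(lra) ltac:(lra)); lra. }
  apply Rle_trans with (Rpower (Rpower (H / G) p) (1 / p)).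
  - apply Rle_Rpower_l; [apply Rlt_le, Rdiv_lt_0_compat; lra |].
    split; [| exact Hpow].
    apply Rmult_lt_0_compat; [| apply Rmult_lt_0_compat]; lra.
  - rewrite Rpower_mult; replace (p * (1 / p)) with 1 by (field; lra).
    rewrite Rpower_1 by exact HHG; lra.
Qed.

End PowerType.

(* [Nat.tail_add] makes [vlift (S m) k v] convertible to [vlift m (S k) (inl v)],
   so an induction on [m] peels off the top level of subdivision. *)
Fixpoint vlift (m : nat) : forall k, PVert k -> PVert (Nat.tail_add m k) :=
  match m return forall k, PVert k -> PVert (Nat.tail_add m k) with
  | O => fun k v => v
  | S m' => fun k v => vlift m' (S k) (inl v : PVert (S k))
  end.

Section Parasol.
Variable o : orientation.

Lemma padj_sym n u v : padj o n u v -> padj o n v u.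
Proof. intros [e [H | H]]; exists e; auto. Qed.

Lemma pwalk_app n u w v a b :
  pwalk o n u w a -> pwalk o n w v b -> pwalk o n u v (a + b).
Proof. induction 1; simpl; [auto | econstructor; eauto]. Qed.

Lemma pwalk1 n u v : padj o n u v -> pwalk o n u v 1.
Proof. intros; econstructor; [eassumption | constructor]. Qed.

Lemma pwalk_rev n u v a : pwalk o n u v a -> pwalk o n v u a.
Proof.
  induction 1; [constructor |].
  rewrite <- Nat.add_1_r; eapply pwalk_app; [eassumption |].
  apply pwalk1, padj_sym; assumption.
Qed.

(* The endpoints of [e] as the [r] and [s] of the parasol that replaces it. *)
Definition rs_ends k (e : PEdge k) : PVert k * PVert k :=
  let uv := pends o k e in if o k e then uv else (snd uv, fst uv).

Lemma padj_rs k e : padj o k (fst (rs_ends k e)) (snd (rs_ends k e)).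
Proof.
  exists e; unfold rs_ends; destruct (o k e); destruct (pends o k e); simpl; auto.
Qed.

Lemma padj_rb k e : padj o (S k) (inl (fst (rs_ends k e))) (inr (e, None)).
Proof. exists (e, ERB); left; reflexivity. Qed.

Lemma padj_bt k e i : padj o (S k) (inr (e, None)) (inr (e, Some i)).
Proof. exists (e, EBT i); left; reflexivity. Qed.

Lemma padj_ts k e i : padj o (S k) (inr (e, Some i)) (inl (snd (rs_ends k e))).
Proof. exists (e, ETS i); left; reflexivity. Qed.

Lemma padj_rs_ends k u v :
  padj o k u v -> exists e, rs_ends k e = (u, v) \/ rs_ends k e = (v, u).
Proof.
  intros [e He]; exists e; unfold rs_ends.
  destruct (o k e); destruct He as [He | He]; rewrite He; auto.
Qed.

Lemma pends_neq k e : fst (pends o k e) <> snd (pends o k e).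
Proof. destruct k as [| k]; [discriminate |]; destruct e as [e []]; discriminate. Qed.

Lemma padj_neq k u v : padj o k u v -> u <> v.
Proof.
  intros [e [He | He]] ->; apply (pends_neq k e); rewrite He; reflexivity.
Qed.

Lemma pwalk_vlift m : forall k u v, padj o k u v ->
  pwalk o (Nat.tail_add m k) (vlift m k u) (vlift m k v) (3 ^ m).
Proof.
  induction m as [| m IHm]; intros k u v Huv; [apply pwalk1, Huv |].
  destruct (padj_rs_ends k u v Huv) as [e Hrs].
  assert (W : pwalk o (Nat.tail_add m (S k))
      (vlift m (S k) (inl (fst (rs_ends k e)))) (vlift m (S k) (inl (snd (rs_ends k e))))
      (3 ^ m + (3 ^ m + (3 ^ m + 0)))).
  { eapply pwalk_app; [apply IHm, padj_rb |].
    eapply pwalk_app; [apply IHm, (padj_bt k e 0) |].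
    eapply pwalk_app; [apply IHm, padj_ts | constructor]. }
  simpl; destruct Hrs as [Hrs | Hrs]; rewrite Hrs in W; [| apply pwalk_rev]; exact W.
Qed.

Definition edge_Lipschitz n (phi : PVert n -> R) eps :=
  forall u v, padj o n u v -> Rabs (phi u - phi v) <= eps.

Lemma pwalk_Lipschitz n phi eps u v w :
  edge_Lipschitz n phi eps -> pwalk o n u v w -> Rabs (phi u - phi v) <= INR w * eps.
Proof.
  intros HL; induction 1 as [u | u x v w Hux _ IH].
  - unfold Rminus; rewrite Rplus_opp_r, Rabs_R0; simpl; lra.
  - rewrite S_INR; specialize (HL _ _ Hux).
    replace (phi u - phi v) with ((phi u - phi x) + (phi x - phi v)) by ring.
    eapply Rle_trans; [apply Rabs_triang | lra].
Qed.

Lemma pdist_ge_Lipschitz n phi eps u v w :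
  0 < eps -> edge_Lipschitz n phi eps -> pwalk o n u v w ->
  Rabs (phi u - phi v) <= eps * pdist o n u v.
Proof.
  intros Heps HL Hw; rewrite Rmult_comm.
  apply (Rmult_le_reg_r (/ eps)); [apply Rinv_0_lt_compat, Heps |].
  rewrite Rmult_assoc, Rinv_r, Rmult_1_r by lra.
  apply (Rinf_ge _ (INR w)); [eauto |].
  intros y [k [Hk ->]]; pose proof (pwalk_Lipschitz n phi eps u v k HL Hk).
  apply (Rmult_le_reg_r eps); [exact Heps |].
  rewrite Rmult_assoc, Rinv_l by lra; lra.
Qed.

Definition interp k (psi : PVert k -> R) : PVert (S k) -> R := fun x =>
  match x with
  | inl v => psi v
  | inr (e, None) => psi (fst (rs_ends k e)) + (psi (snd (rs_ends k e)) - psi (fst (rs_ends k e))) / 3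
  | inr (e, Some _) => psi (fst (rs_ends k e)) + 2 * (psi (snd (rs_ends k e)) - psi (fst (rs_ends k e))) / 3
  end.

Lemma interp_Lipschitz k psi eps :
  edge_Lipschitz k psi eps -> edge_Lipschitz (S k) (interp k psi) (eps / 3).
Proof.
  intros HL u v [[e x] Hx].
  assert (Hr := HL _ _ (padj_rs k e)).
  destruct x; simpl in Hx; fold (rs_ends k e) in Hx;
    destruct Hx as [Hx | Hx]; injection Hx; intros; subst; simpl.
  all: revert Hr; split_Rabs; lra.
Qed.

Fixpoint interpN (m : nat) : forall k, (PVert k -> R) -> PVert (Nat.tail_add m k) -> R :=
  match m return forall k, (PVert k -> R) -> PVert (Nat.tail_add m k) -> R with
  | O => fun k psi => psi
  | S m' => fun k psi => interpN m' (S k) (interp k psi)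
  end.

Lemma interpN_vlift m : forall k psi v, interpN m k psi (vlift m k v) = psi v.
Proof. induction m as [| m IHm]; intros; [reflexivity | apply IHm]. Qed.

Lemma interpN_Lipschitz m : forall k psi eps,
  edge_Lipschitz k psi eps -> edge_Lipschitz (Nat.tail_add m k) (interpN m k psi) (eps / 3 ^ m).
Proof.
  induction m as [| m IHm]; intros k psi eps HL; simpl.
  - unfold Rdiv; rewrite Rinv_1, Rmult_1_r; exact HL.
  - replace (eps / (3 * 3 ^ m)) with (eps / 3 / 3 ^ m)
      by (field; apply pow_nonzero; lra).
    apply IHm, interp_Lipschitz, HL.
Qed.

(* Lower bounds on distances in [P_(k+m)] come from edge-Lipschitz functions
   on [P_k], interpolated down to [P_(k+m)]. *)
Lemma pdist_vlift_ge m k psi u v w :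
  edge_Lipschitz k psi 1 -> pwalk o (Nat.tail_add m k) (vlift m k u) (vlift m k v) w ->
  3 ^ m * Rabs (psi u - psi v) <= pdist o (Nat.tail_add m k) (vlift m k u) (vlift m k v).
Proof.
  intros HL Hw.
  pose proof (pow_lt 3 m ltac:(lra)) as H3.
  pose proof (pdist_ge_Lipschitz _ _ _ _ _ _ (Rdiv_lt_0_compat 1 _ Rlt_0_1 H3)
    (interpN_Lipschitz m k psi 1 HL) Hw) as Hd.
  rewrite !interpN_vlift in Hd.
  apply (Rmult_le_compat_l (3 ^ m)) in Hd; [| lra].
  replace (3 ^ m * (1 / 3 ^ m * pdist o (Nat.tail_add m k) (vlift m k u) (vlift m k v)))
    with (pdist o (Nat.tail_add m k) (vlift m k u) (vlift m k v)) in Hd by (field; lra).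
  exact Hd.
Qed.

Lemma pdist_vlift_edge m k u v :
  padj o k u v -> 3 ^ m <= pdist o (Nat.tail_add m k) (vlift m k u) (vlift m k v).
Proof.
  intros Huv.
  set (psi := fun x => if excluded_middle_informative (x = u) then 1 else 0).
  assert (HL : edge_Lipschitz k psi 1).
  { intros x y _; unfold psi.
    destruct (excluded_middle_informative _), (excluded_middle_informative _);
      apply Rabs_le; lra. }
  pose proof (pdist_vlift_ge m k psi u v _ HL (pwalk_vlift m k u v Huv)) as Hd.
  unfold psi in Hd.
  destruct (excluded_middle_informative (u = u)) as [_ | C]; [| congruence].
  destruct (excluded_middle_informative (v = u)) as [C | _];
    [exfalso; exact (padj_neq k u v Huv (eq_sym C)) |].
  rewrite Rminus_0_r, Rabs_R1, Rmult_1_r in Hd; exact Hd.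
Qed.

(* [psi] is [2] at the tip [t_(e,i)], [1] at its two neighbours [b_e] and
   [s_e], and [0] elsewhere. *)
Lemma pdist_vlift_tips m k e i j :
  i <> j -> 2 * 3 ^ m <=
    pdist o (Nat.tail_add m (S k)) (vlift m (S k) (inr (e, Some i))) (vlift m (S k) (inr (e, Some j))).
Proof.
  intros Hij.
  set (psi := fun x : PVert (S k) => match x with
    | inl w => if excluded_middle_informative (w = snd (rs_ends k e)) then 1 else 0
    | inr (e', None) => if excluded_middle_informative (e' = e) then 1 else 0
    | inr (e', Some j') => if excluded_middle_informative (e' = e /\ j' = i) then 2 else 0
    end).
  assert (HL : edge_Lipschitz (S k) psi 1).
  { intros u v [[e' x] Hx]; destruct x; simpl in Hx; fold (rs_ends k e') in Hx;
      destruct Hx as [Hx | Hx]; injection Hx; intros; subst; simpl;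
      repeat match goal with
        |- context [excluded_middle_informative ?P] => destruct (excluded_middle_informative P)
      end;
      try match goal with H : _ /\ _ |- _ => destruct H end;
      subst; try congruence; apply Rabs_le; lra. }
  assert (W : pwalk o (Nat.tail_add m (S k)) (vlift m (S k) (inr (e, Some i)))
                (vlift m (S k) (inr (e, Some j))) (3 ^ m + 3 ^ m)).
  { eapply pwalk_app; apply pwalk_vlift; [apply padj_sym |]; apply padj_bt. }
  pose proof (pdist_vlift_ge m (S k) psi _ _ _ HL W) as Hd; unfold psi in Hd.
  destruct (excluded_middle_informative (e = e /\ i = i)) as [_ | C]; [| tauto].
  destruct (excluded_middle_informative (e = e /\ j = i)) as [[_ C] | _]; [congruence |].
  rewrite Rminus_0_r, Rabs_pos_eq in Hd by lra; lra.
Qed.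

Lemma pdist_adj n u v : padj o n u v -> pdist o n u v <= 1.
Proof.
  intros H; apply (Rinf_le _ _ 0); [exists 1%nat; split; [apply pwalk1, H | reflexivity] |].
  intros y [k [_ ->]]; apply pos_INR.
Qed.

Lemma pdist_nonneg n u v : 0 <= pdist o n u v.
Proof. apply Rinf_nonneg; intros y [k [_ ->]]; apply pos_INR. Qed.

End Parasol.

Section LevelInduction.
Variables (Y : Banach) (N : Y -> R) (p c : R) (o : orientation).
Hypothesis HN : equiv_norm Y N.
Hypothesis hp : 1 < p.
Hypothesis hc : 0 < c.
Hypothesis hbeta : forall t, 0 < t -> t <= 2 -> beta_modulus Y N t >= c * Rpower t p.
Variables G H : R.
Hypothesis HG : 0 < G.

Definition embeds_with n (f : PVert n -> Y) :=
  (forall u v, padj o n u v -> N (vsub Y (f u) (f v)) <= H) /\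
  (forall u v, G * pdist o n u v <= N (vsub Y (f u) (f v))).

Lemma parasol_contraction m k (f : PVert (Nat.tail_add m (S k)) -> Y) A :
  A <= H ->
  (forall u v, G * pdist o _ u v <= N (vsub Y (f u) (f v))) ->
  (forall u v, padj o (S k) u v ->
     N (vsub Y (f (vlift m (S k) u)) (f (vlift m (S k) v))) <= 3 ^ m * A) ->
  forall u v, padj o k u v ->
  N (vsub Y (f (vlift (S m) k u)) (f (vlift (S m) k v))) <= 3 ^ S m * (A - level_loss p c G H).
Proof.
  intros HAH Hco Hedge u v Huv.
  destruct (padj_rs_ends o k u v Huv) as [e Hrs].
  set (lift := fun x => f (vlift m (S k) x)).
  set (r := lift (inl (fst (rs_ends o k e)))); set (b := lift (inr (e, None))).
  set (s := lift (inl (snd (rs_ends o k e)))); set (tn := fun n => lift (inr (e, Some n))).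
  assert (Hsg : 0 < 3 ^ m) by (apply pow_lt; lra).
  assert (HGA : G <= A).
  { pose proof (pdist_vlift_edge o m (S k) _ _ (padj_rb o k e)).
    pose proof (Hco (vlift m (S k) (inl (fst (rs_ends o k e)))) (vlift m (S k) (inr (e, None)))).
    pose proof (Hedge _ _ (padj_rb o k e)); nra. }
  assert (Hsr : N (vsub Y s r) <= 3 * 3 ^ m * (A - level_loss p c G H)).
  { apply (three_step_contraction Y N p c HN hp hc hbeta G A H (3 ^ m) r b s tn); auto.
    - apply Hedge, padj_sym, padj_rb.
    - intros n; apply Hedge, padj_sym, padj_bt.
    - intros n; apply Hedge, padj_sym, padj_ts.
    - intros i j Hij.
      pose proof (pdist_vlift_tips o m k e i j Hij).
      pose proof (Hco (vlift m (S k) (inr (e, Some i))) (vlift m (S k) (inr (e, Some j)))).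
      unfold tn, lift; nra. }
  simpl; unfold s, r, lift in Hsr.
  destruct Hrs as [Hrs | Hrs]; rewrite Hrs in Hsr; simpl in Hsr;
    [rewrite (N_vsub_sym Y N HN) |]; exact Hsr.
Qed.

Lemma embeds_with_vlift_bound m : forall k (f : PVert (Nat.tail_add m k) -> Y),
  embeds_with _ f -> forall u v, padj o k u v ->
  N (vsub Y (f (vlift m k u)) (f (vlift m k v))) <= 3 ^ m * (H - INR m * level_loss p c G H).
Proof.
  induction m as [| m IHm]; intros k f [Hedge Hco].
  - simpl; rewrite Rmult_0_l, Rminus_0_r, Rmult_1_l; exact Hedge.
  - replace (H - INR (S m) * level_loss p c G H) with (H - INR m * level_loss p c G H - level_loss p c G H)
      by (rewrite S_INR; ring).
    apply parasol_contraction; [| exact Hco | exact (IHm (S k) f (conj Hedge Hco))].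
    pose proof (level_loss_pos p c hc G H); pose proof (pos_INR m); nra.
Qed.

Lemma padj_P0 : padj o 0 false true.
Proof. exists tt; left; reflexivity. Qed.

Lemma embeds_with_level_bound l (f : PVert (Nat.tail_add l 0) -> Y) :
  embeds_with _ f -> INR l * level_loss p c G H <= H - G.
Proof.
  intros Hf.
  pose proof (embeds_with_vlift_bound l 0 f Hf _ _ padj_P0) as Hup.
  pose proof (pdist_vlift_edge o l 0 _ _ padj_P0).
  pose proof (proj2 Hf (vlift l 0 false) (vlift l 0 true)).
  pose proof (pow_lt 3 l ltac:(lra)); nra.
Qed.

End LevelInduction.

Section LeastConstant.
Variables (T : Type) (dA dB : T -> T -> R).
Hypothesis dB_nonneg : forall u v, 0 <= dB u v.

Definition least_const :=
  Rinf (fun L => 0 <= L /\ forall u v, dA u v <= L * dB u v).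

Lemma least_const_spec :
  (exists L, forall u v, dA u v <= L * dB u v) ->
  0 <= least_const /\ forall u v, dA u v <= least_const * dB u v.
Proof.
  intros [L0 H0].
  assert (HS : 0 <= Rmax L0 0 /\ forall u v, dA u v <= Rmax L0 0 * dB u v).
  { split; [apply Rmax_r |]; intros u v.
    pose proof (H0 u v); pose proof (dB_nonneg u v); pose proof (Rmax_l L0 0); nra. }
  split; [apply (Rinf_ge _ _ 0 HS); intros y [Hy _]; exact Hy |].
  intros u v; destruct (Rle_lt_or_eq_dec 0 _ (dB_nonneg u v)) as [Hpos | Hzero].
  - assert (Hq : dA u v / dB u v <= least_const).
    { apply (Rinf_ge _ _ _ HS); intros L [_ HL]; specialize (HL u v).
      apply (Rmult_le_reg_r (dB u v)); [exact Hpos |].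
      unfold Rdiv; rewrite Rmult_assoc, Rinv_l; lra. }
    apply (Rmult_le_compat_r (dB u v)) in Hq; [| lra].
    unfold Rdiv in Hq; rewrite Rmult_assoc, Rinv_l, Rmult_1_r in Hq; lra.
  - rewrite <- Hzero, Rmult_0_r; specialize (H0 u v); rewrite <- Hzero in H0; lra.
Qed.

End LeastConstant.

Lemma Lip_spec Y o l f : bi_Lipschitz Y o l f ->
  0 <= Lip Y o l f /\ is_Lip_const Y o l f (Lip Y o l f).
Proof.
  intros [HL _].
  exact (least_const_spec _ _ _ (pdist_nonneg o l) HL).
Qed.

Lemma invLip_spec Y o l f : bi_Lipschitz Y o l f ->
  0 <= invLip Y o l f /\ is_invLip_const Y o l f (invLip Y o l f).
Proof.
  intros [_ HL].
  exact (least_const_spec _ _ _ (fun u v => vnorm_nonneg Y _) HL).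
Qed.

Section Distortion.
Variables (Y : Banach) (N : Y -> R) (p c a b : R) (o : orientation).
Hypothesis HN : equiv_norm Y N.
Hypothesis hp : 1 < p.
Hypothesis hc : 0 < c.
Hypothesis hbeta : forall t, 0 < t -> t <= 2 -> beta_modulus Y N t >= c * Rpower t p.
Hypothesis Ha : 0 < a.
Hypothesis Hb : 0 < b.
Hypothesis Hab : forall x, a * vnorm Y x <= N x /\ N x <= b * vnorm Y x.

Lemma embeds_with_Lip n (f : PVert n -> Y) :
  bi_Lipschitz Y o n f -> 0 < invLip Y o n f ->
  embeds_with Y N o (a / invLip Y o n f) (b * Lip Y o n f) n f.
Proof.
  intros Hbi HL2pos.
  destruct (Lip_spec Y o _ f Hbi) as [HL1p HL1], (invLip_spec Y o _ f Hbi) as [_ HL2].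
  set (L1 := Lip Y o _ f) in *; set (L2 := invLip Y o _ f) in *.
  split; intros u v; destruct (Hab (vsub Y (f u) (f v))) as [Hlo Hhi].
  - intros Huv; apply Rle_trans with (b * vnorm Y (vsub Y (f u) (f v))); [exact Hhi |].
    apply Rmult_le_compat_l; [lra |]; eapply Rle_trans; [apply HL1 |].
    rewrite <- (Rmult_1_r L1) at 2; apply Rmult_le_compat_l; [exact HL1p |].
    exact (pdist_adj o _ _ _ Huv).
  - specialize (HL2 u v); pose proof (pdist_nonneg o _ u v).
    apply Rle_trans with (a * vnorm Y (vsub Y (f u) (f v))); [| exact Hlo].
    replace (a / L2 * pdist o _ u v) with (a * (pdist o _ u v / L2)) by (field; lra).
    apply Rmult_le_compat_l; [lra |].
    apply (Rmult_le_reg_r L2); [exact HL2pos |].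
    unfold Rdiv; rewrite Rmult_assoc, Rinv_l; lra.
Qed.

Lemma cY_ge_parasol l : (1 <= l)%nat ->
  cY_ge Y o (Nat.tail_add l 0)
    (a / b * Rpower (2 / 3 * c * Rpower 2 p) (1 / p) * Rpower (INR l) (1 / p)).
Proof.
  intros Hl f _ Hbi.
  destruct (invLip_spec Y o _ f Hbi) as [HL2p HL2].
  set (L1 := Lip Y o _ f) in *; set (L2 := invLip Y o _ f) in *.
  assert (HL2pos : 0 < L2).
  { pose proof (pdist_vlift_edge o l 0 _ _ (padj_P0 o)) as Hd.
    pose proof (HL2 (vlift l 0 false) (vlift l 0 true)).
    pose proof (pow_lt 3 l ltac:(lra)).
    destruct (Rle_lt_or_eq_dec 0 L2 HL2p) as [| HL2z]; [assumption |].
    rewrite <- HL2z in *; lra. }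
  pose proof (embeds_with_Lip _ f Hbi HL2pos) as Hemb; fold L1 L2 in Hemb.
  assert (HG : 0 < a / L2) by (apply Rdiv_lt_0_compat; lra).
  assert (Hlpos : 0 < INR l) by (apply lt_0_INR; lia).
  pose proof (level_loss_root p c hp hc (INR l) _ _ Hlpos HG
    (embeds_with_level_bound Y N p c o HN hp hc hbeta _ _ HG l f Hemb)) as Hroot.
  assert (0 < 2 / 3 * c * Rpower 2 p) by (pose proof (Rpower_pos 2 p); nra).
  rewrite <- Rpower_mult_distr in Hroot by lra.
  replace (b * L1 / (a / L2)) with (b / a * (L1 * L2)) in Hroot by (field; lra).
  apply (Rmult_le_compat_l (a / b)) in Hroot; [| apply Rlt_le, Rdiv_lt_0_compat; lra].
  replace (a / b * (b / a * (L1 * L2))) with (L1 * L2) in Hroot by (field; lra).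
  lra.
Qed.

End Distortion.

Theorem theorem4 (Y : Banach) (p : R) (hp : 1 < p)
  (hY : exists N : Y -> R, equiv_norm Y N /\ beta_power_type Y N p) :
  exists C : R, 0 < C /\
    forall (o : orientation) (l : nat), (1 <= l)%nat ->
      cY_ge Y o l (C * Rpower (INR l) (1 / p)).
Proof.
  destruct hY as [N [HN [c [hc hbeta]]]].
  pose proof HN as (_ & _ & _ & _ & a & b & Ha & Hb & Hab).
  exists (a / b * Rpower (2 / 3 * c * Rpower 2 p) (1 / p)); split.
  - apply Rmult_lt_0_compat; [apply Rdiv_lt_0_compat; lra | apply Rpower_pos].
  - intros o l Hl.
    pose proof (cY_ge_parasol Y N p c a b o HN hp hc hbeta Ha Hb Hab l Hl) as Hd.
    rewrite Nat.tail_add_spec, Nat.add_0_r in Hd; exact Hd.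
Qed.
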